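(* Let $\mathcal{T}$ be a planar rectilinear mesh with convex polygonal faces, $m\in\mathbb{Z}_{\ge0}$, $r\in\mathbb{Z}_{\ge-1}$, and $\mathbf r$ a smoothness distribution with values in $\{r,-1\}$ on interior edges. Let $\sigma$ be a face bounded by interior edges $\tau_1,\dots,\tau_k$ with $\mathbf r(\tau_i)=r$, let $\gamma_i=\tau_i\cap\tau_{i+1}$ (indices cyclic in $1,\dots,k$) be interior vertices, and let $\ell_i$ be an affine-linear form vanishing on $\tau_i$. Let $\mathbf s$ agree with $\mathbf r$ except $\mathbf s(\tau_i)=-1$ for $i=1,\dots,k$, and let $$\phi:\bigoplus_{i=1}^k{\mathcal{P}}_m/\langle\ell_i^{r+1}\rangle\longrightarrow\bigoplus_{i=1}^k{\mathcal{P}}_m/\mathfrak{J}^{\mathbf r}_{\gamma_i},\qquad (a_1,\dots,a_k)\mapsto(-a_1+a_2,\,-a_2+a_3,\,\dots,\,-a_{k-1}+a_k,\,a_1-a_k)$$ be the nontrivial map of the complex $\mathcal{I}^{\mathbf s}/\mathcal{I}^{\mathbf r}$. Then the cokernel of $\phi$ (and hence $H_0(\mathcal{I}^{\mathbf s}/\mathcal{I}^{\mathbf r})$) is isomorphic to ${\mathcal{P}}_m/(\mathfrak{J}^{\mathbf r}_{\gamma_1}+\cdots+\mathfrak{J}^{\mathbf r}_{\gamma_k})$.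
   Context: $\mathcal{T}$ is a finite subdivision of a closed polygonal region $\Omega\subset\mathbb{R}^2$ (possibly not simply connected) into convex polygonal faces meeting along straight edges and vertices. An edge or vertex is interior if not contained in $\partial\Omega$; $\mathcal{T}^\circ_1,\mathcal{T}^\circ_0$ denote interior edges and vertices. ${\mathcal{P}}_m$ is the space of real bivariate polynomials of total degree at most $m$; $\langle f_1,\dots,f_j\rangle$ denotes the subspace of ${\mathcal{P}}_m$ of polynomial combinations $\sum g_if_i$ lying in ${\mathcal{P}}_m$. A smoothness distribution is a map $\mathbf{r}:\mathcal{T}^\circ_1\to\mathbb{Z}_{\ge -1}$. For $\tau\in\mathcal{T}^\circ_1$ with vanishing affine-linear form $\ell_\tau$, $\mathfrak{J}^{\mathbf r}_\tau=\langle \ell_\tau^{\mathbf r(\tau)+1}\rangle$ (equal to ${\mathcal{P}}_m$ if $\mathbf r(\tau)=-1$); for $\gamma\in\mathcal{T}^\circ_0$, $\mathfrak{J}^{\mathbf r}_\gamma=\sum_{\tau\ni\gamma}\mathfrak{J}^{\mathbf r}_\tau$. $\mathcal{I}^{\mathbf r}$ is the chain complex $0\to\bigoplus_{\tau\in\mathcal{T}^\circ_1}\mathfrak{J}^{\mathbf r}_\tau\to\bigoplus_{\gamma\in\mathcal{T}^\circ_0}\mathfrak{J}^{\mathbf r}_\gamma$ (degrees $2,1,0$) whose nonzero map is the cellular boundary map relative to $\partial\Omega$ (signs $\pm1$ from fixed edge orientations); for $\mathbf s\le\mathbf r$ pointwise, $\mathcal{I}^{\mathbf s}/\mathcal{I}^{\mathbf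 r}$ is the quotient complex. *)

From HB Require Import structures.
From mathcomp Require Import all_boot all_order all_algebra.
From mathcomp Require Import reals.
From mathcomp Require Import mpoly.

Set Implicit Arguments.
Unset Strict Implicit.
Unset Printing Implicit Defensive.

Import Order.TTheory GRing.Theory Num.Theory.
Local Open Scope ring_scope.

Section MeshDefs.
Variable R : realType.

Notation poly2 := {mpoly R[2]}.

(* P_m : polynomials of total degree at most m  (msize p = 1 + deg p). *)
Definition Pm (m : nat) (p : poly2) : Prop := (msize p <= m.+1)%N.

Definition gen1 (m : nat) (f : poly2) : poly2 -> Prop :=
  fun p => Pm m p /\ exists g : poly2, p = g * f.

Definition affine_form (l : poly2) : Prop :=
  exists c0 c1 c2 : R, (c1 != 0 \/ c2 != 0) /\
    l = c0%:MP + c1 *: 'X_(0 : 'I_2) + c2 *: 'X_(1 : 'I_2).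

Definition vanishes_on_segment (l : poly2) (a b : 'I_2 -> R) : Prop :=
  affine_form l /\ l.@[a] = 0 /\ l.@[b] = 0.

(* Smoothness ideal of an edge: J_tau = < l_tau ^ (r(tau)+1) >
   (= P_m when r(tau) = -1, since then the exponent is 0). *)
Definition Jedge (m : nat) (l : poly2) (rt : int) : poly2 -> Prop :=
  gen1 m (l ^+ absz (rt + 1)%R).

Definition sum_sub (I : finType) (P : pred I) (S : I -> poly2 -> Prop)
  : poly2 -> Prop :=
  fun p => exists q : I -> poly2, (forall i, P i -> S i (q i)) /\
                                  p = \sum_(i | P i) q i.

(* Quotient isomorphism: A/A' and B/B' (A' <= A, B' <= B subspaces of
   R-vector spaces U, W) are isomorphic, witnessed by a linear map
   f : U -> W inducing a bijection A/A' -> B/B'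
   (well-defined, surjective, injective). *)
Definition quot_iso (U W : lmodType R) (A A' : U -> Prop) (B B' : W -> Prop)
  : Prop :=
  exists f : U -> W,
    (forall (c : R) (u v : U), f (c *: u + v) = c *: f u + f v) /\
    (forall u, A u -> B (f u)) /\
    (forall u, A' u -> B' (f u)) /\
    (forall w, B w -> exists u, A u /\ B' (w - f u)) /\
    (forall u, A u -> B' (f u) -> A' u).

End MeshDefs.

From HB Require Import structures.
From mathcomp Require Import all_boot all_order all_algebra.
From mathcomp Require Import reals.
From mathcomp Require Import mpoly.
Import Order.TTheory GRing.Theory Num.Theory.
Local Open Scope ring_scope.

Set Implicit Arguments.
Unset Strict Implicit.
Unset Printing Implicit Defensive.

(* The sum map (b_1, ..., b_k) |-> b_1 + ... + b_k sends the image of phi to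
   zero, and conversely every family summing to zero is a cyclic difference
   a_(i+1) - a_i, namely of its partial sums a_j = c_1 + ... + c_(j-1).
   Hence the sum map identifies (⊕ P_m / J_i) / im phi with P_m / Σ J_i. *)

Section CyclicDifferences.
Variables (V : zmodType) (k : nat).

Definition cyclic_diff (a : {ffun 'I_k -> V}) : {ffun 'I_k -> V} :=
  [ffun i => a (ordS i) - a i].

Definition partial_sums (c : 'I_k -> V) : {ffun 'I_k -> V} :=
  [ffun j : 'I_k => \sum_(i : 'I_k | (i < j)%N) c i].

Lemma sum_cyclic_diff (a : {ffun 'I_k -> V}) : \sum_i cyclic_diff a i = 0.
Proof.
under eq_bigr do rewrite ffunE.
by rewrite sumrB [X in _ - X](reindex_inj (@ordS_inj k)) subrr.
Qed.

Lemma cyclic_diff_partial_sums (c : 'I_k -> V) :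
  \sum_i c i = 0 -> forall i, cyclic_diff (partial_sums c) i = c i.
Proof.
move=> sum_c0 i; rewrite !ffunE.
have lt_ik := ltn_ord i.
have [lt_i1k | le_ki1] := ltnP i.+1 k.
  have -> : (ordS i : nat) = i.+1 by rewrite /= modn_small.
  rewrite (bigD1 i) //= (eq_bigl (fun j : 'I_k => (j < i)%N)) ?addrK // => j.
  by rewrite ltnS [(j < i)%N]ltn_neqAle andbC.
(* i is the last index, so a_(ordS i) = a_0 is the empty sum *)
have k_eq : k = i.+1 by apply/eqP; rewrite eqn_leq le_ki1 lt_ik.
have -> : (ordS i : nat) = 0%N by rewrite /= -k_eq modnn.
rewrite big_pred0 // sub0r.
move/eqP: sum_c0; rewrite (bigD1 i) //= addr_eq0 => /eqP ->.
congr (- _); apply: eq_bigl => j.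
by rewrite ltn_neqAle -ltnS -k_eq ltn_ord andbT.
Qed.

End CyclicDifferences.

Section SumSub.
Variables (R : realType) (I : finType) (P : pred I).
Variables (S : I -> {mpoly R[2]} -> Prop) (M : {mpoly R[2]} -> Prop).

Lemma sum_sub0 : (forall i, P i -> S i 0) -> sum_sub P S 0.
Proof. by move=> S0; exists (fun _ => 0); split; last by rewrite big1. Qed.

Lemma sum_sub_closed :
  M 0 -> (forall p q, M p -> M q -> M (p + q)) ->
  (forall i p, P i -> S i p -> M p) -> forall p, sum_sub P S p -> M p.
Proof.
move=> M0 MD SM p [q [Sq ->]].
by apply: big_ind => // i Pi; apply: SM Pi (Sq i Pi).
Qed.

End SumSub.

Section CyclicCokernel.
Variable R : realType.
Local Notation V := {mpoly R[2]}.
Variable M : V -> Prop.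
Hypotheses (M0 : M 0) (MD : forall u v, M u -> M v -> M (u + v))
  (MN : forall v, M v -> M (- v)).
Variables (k : nat) (J : 'I_k -> V -> Prop).
Hypotheses (k_gt0 : (0 < k)%N) (J0 : forall i, J i 0)
  (JM : forall i v, J i v -> M v).

Let M_sum (I : finType) (P : pred I) (F : I -> V) :
  (forall i, P i -> M (F i)) -> M (\sum_(i | P i) F i).
Proof. exact: big_ind. Qed.

Lemma quot_iso_coker_cyclic_diff :
  quot_iso (fun b : {ffun 'I_k -> V} => forall i, M (b i))
    (fun b => (forall i, M (b i)) /\ exists a : {ffun 'I_k -> V},
       (forall i, M (a i)) /\ (forall i, J i (b i - cyclic_diff a i)))
    M (sum_sub (fun _ : 'I_k => true) J).
Proof.
exists (fun b : {ffun 'I_k -> V} => \sum_i b i); split.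
  move=> c u v; rewrite scaler_sumr -big_split /=.
  by apply: eq_bigr => i _; rewrite !ffunE.
split; first by move=> u Mu; apply: M_sum.
split.
  move=> u [_ [a [_ Ja]]]; exists (fun i => u i - cyclic_diff a i).
  by split=> [i _|]; [apply: Ja | rewrite sumrB sum_cyclic_diff subr0].
split.
  move=> w Mw; pose i0 := Ordinal k_gt0.
  exists [ffun i => if i == i0 then w else 0]; split.
    by move=> i; rewrite ffunE; case: ifP.
  rewrite (bigD1 i0) //= big1 => [|i /negbTE ne_i]; last by rewrite ffunE ne_i.
  rewrite ffunE eqxx addr0 subrr.
  by exists (fun _ => 0); split; last by rewrite big1.
move=> u Mu [q [Jq sum_q]]; split=> //.
pose c i := u i - q i.
have sum_c0 : \sum_i c i = 0 by rewrite sumrB sum_q subrr.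
exists (partial_sums c); split.
  by move=> j; rewrite ffunE; apply: M_sum => i _; apply: MD (MN (JM (Jq i _))).
move=> i; rewrite cyclic_diff_partial_sums // /c opprB addrC subrK.
exact: Jq.
Qed.

End CyclicCokernel.

Section PolynomialSpaces.
Variables (R : realType) (m : nat).

Lemma Pm0 : Pm m (0 : {mpoly R[2]}).
Proof. by rewrite /Pm msize0. Qed.

Lemma PmD (p q : {mpoly R[2]}) : Pm m p -> Pm m q -> Pm m (p + q).
Proof.
rewrite /Pm => Pp Pq; apply: leq_trans (msizeD_le _ _) _.
by rewrite geq_max Pp Pq.
Qed.

Lemma PmN (p : {mpoly R[2]}) : Pm m p -> Pm m (- p).
Proof. by rewrite /Pm msizeN. Qed.

Lemma Jedge0 (l : {mpoly R[2]}) rt : Jedge m l rt 0.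
Proof. by split; [apply: Pm0 | exists 0; rewrite mul0r]. Qed.

Lemma Jedge_Pm (l : {mpoly R[2]}) rt p : Jedge m l rt p -> Pm m p.
Proof. by case. Qed.

End PolynomialSpaces.

Theorem mainTheorem7 (R : realType)
  (V E : finType) (pos : V -> 'I_2 -> R) (intV : pred V)
  (src dst : E -> V)
  (Hsd : forall e, src e != dst e)
  (lE : E -> {mpoly R[2]})
  (HlE : forall e, vanishes_on_segment (lE e) (pos (src e)) (pos (dst e)))
  (m : nat) (r : int) (Hr : -1 <= r)
  (rr : E -> int) (Hrr : forall e, rr e = r \/ rr e = -1)
  (k : nat) (Hk : (3 <= k)%N)
  (tau : 'I_k -> E) (Htau_inj : injective tau)
  (Htau_r : forall i, rr (tau i) = r)
  (gam : 'I_k -> V)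
  (Hgam_int : forall i, intV (gam i))
  (Hgam1 : forall i, gam i = src (tau i) \/ gam i = dst (tau i))
  (Hgam2 : forall i, gam i = src (tau (ordS i)) \/ gam i = dst (tau (ordS i)))
  (l : 'I_k -> {mpoly R[2]})
  (Hl : forall i, vanishes_on_segment (l i) (pos (src (tau i))) (pos (dst (tau i)))) :
  let inc := fun (v : V) (e : E) => (src e == v) || (dst e == v) in
  (* J^r_gamma = sum over interior edges containing gamma of J^r_tau *)
  let Jv := fun v : V => sum_sub (inc v) (fun e => Jedge m (lE e) (rr e)) in
  (* phi on representatives: (phi a)_i = - a_i + a_(i+1)  (cyclically) *)
  let phi := fun a : {ffun 'I_k -> {mpoly R[2]}} =>
               [ffun i => a (ordS i) - a i] in
  (* coker phi = (⊕_i P_m / J_{gam i}) / im phi, presented as A / A' *)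
  let A := fun b : {ffun 'I_k -> {mpoly R[2]}} => forall i, Pm m (b i) in
  let A' := fun b : {ffun 'I_k -> {mpoly R[2]}} =>
              A b /\ exists a : {ffun 'I_k -> {mpoly R[2]}},
                (forall i, Pm m (a i)) /\
                (forall i, Jv (gam i) (b i - phi a i)) in
  (* P_m / (J_{gam 1} + ... + J_{gam k}) *)
  let B := Pm m in
  let B' := sum_sub (fun _ : 'I_k => true) (fun i => Jv (gam i)) in
  quot_iso A A' B B'.
Proof.
move=> inc Jv phi A A' B B'.
have Jv0 v : Jv v 0 by apply: sum_sub0 => e _; apply: Jedge0.
have Jv_Pm v p : Jv v p -> Pm m p.
  by apply: sum_sub_closed => [||e q _]; [apply: Pm0 | apply: PmD | apply: Jedge_Pm].
apply: (quot_iso_coker_cyclic_diff (@Pm0 R m) (@PmD R m) (@PmN R m)).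
- exact: leq_trans Hk.
- by move=> i; apply: Jv0.
- by move=> i; apply: Jv_Pm.
Qed.
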